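(* There exist a financial system $S$ with payment priorities and a bank $v$ such that: $S$ has exactly one solution $r$; and for some system $S'$ obtained from $S$ by changing the priorities of (some of) the contracts whose debtor is $v$ (everything else unchanged), $S'$ has exactly one solution $r'$ and $r'_v>r_v$.
   Context: A financial system with payment priorities consists of: a finite set $V$ of banks; external assets $e_v\ge 0$ for each $v\in V$; a number $P\ge 1$ of priority levels; and a finite set of contracts, each of which is either a debt contract from a debtor $u$ to a creditor $v\neq u$ with weight $c>0$, or a credit default swap (CDS) from a debtor $u$ to a creditor $v\neq u$ in reference to a bank $w\notin\{u,v\}$ (the reference entity) with weight $c>0$. Every contract has a priority in $\{1,\dots,P\}$ (1 is the highest priority). It is assumed that every bank that is the reference entity of some CDS is the debtor of at least one debt contract of positive weight. Given a recovery rate vector $r\in[0,1]^V$: the liability of a contract $k$ is $l_k(r)=c$ if $k$ is a debt of weight $c$, and $l_k(r)=c\,(1-r_w)$ if $k$ is a CDS of weight $c$ in reference to $w$. For a bank $v$, $l_v(r)$ is the sum of the liabilities of the contracts with debtor $v$; $l_v^{(\rho)}(r)$ is the sum of the liabilities of contracts with debtor $v$ and priority $\rho$; and $l_v^{(\le\rho)}(r)=\sum_{i=1}^{\rho}l_v^{(i)}(r)$ (with $l_v^{(\le 0)}=0$). The payment on a contract $k$ with debtor $v$ and priority $\rho$ is $p_k(r)=l_k(r)\cdot\min\{1,\max\{0,(r_v l_v(r)-l_v^{(\le\rho-1)}(r))/l_v^{(\rho)}(r)\}\}$ (and $p_k(r)=0$ if $l_v^{(\rho)}(r)=0$). The assets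 of $v$ are $a_v(r)=e_v+\sum_k p_k(r)$, summing over contracts $k$ with creditor $v$. A vector $r\in[0,1]^V$ is a solution (clearing vector) if for every $v\in V$: $r_v=1$ when $a_v(r)\ge l_v(r)$, and $r_v=a_v(r)/l_v(r)$ when $a_v(r)<l_v(r)$. The payoff of $v$ is $q_v(r)=\max\{a_v(r)-l_v(r),0\}$. When $P=1$, payments reduce to $p_k(r)=r_v\,l_k(r)$ (principle of proportionality); this is called the base model. *)

From Stdlib Require Import Reals Lra List.
Import ListNotations.
Open Scope R_scope.

(* Banks are the natural numbers 0 .. nbanks-1. *)
Record contract := mkContract {
  debtor : nat;
  creditor : nat;
  weight : R;
  reference : option nat;  (* None = debt contract; Some w = CDS in reference to w *)
  prio : nat               (* priority, 1 = highest *)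
}.

Record fsystem := mkSystem {
  nbanks : nat;
  ext : nat -> R;           (* external assets *)
  nprio : nat;
  contracts : list contract
}.

Definition sumR (l : list R) : R := fold_right Rplus 0 l.

Definition wf_contract (S : fsystem) (k : contract) : Prop :=
  (debtor k < nbanks S)%nat /\ (creditor k < nbanks S)%nat /\
  debtor k <> creditor k /\ 0 < weight k /\
  (1 <= prio k <= nprio S)%nat /\
  match reference k with
  | None => True
  | Some w => (w < nbanks S)%nat /\ w <> debtor k /\ w <> creditor k /\
      exists k', In k' (contracts S) /\ debtor k' = w /\
                 reference k' = None /\ 0 < weight k'
  end.

Definition wf_system (S : fsystem) : Prop :=
  (1 <= nprio S)%nat /\
  (forall v, (v < nbanks S)%nat -> 0 <= ext S v) /\
  Forall (wf_contract S) (contracts S).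

Definition liab (r : nat -> R) (k : contract) : R :=
  match reference k with
  | None => weight k
  | Some w => weight k * (1 - r w)
  end.

Definition liab_bank (S : fsystem) (r : nat -> R) (v : nat) : R :=
  sumR (map (liab r) (filter (fun k => Nat.eqb (debtor k) v) (contracts S))).

Definition liab_prio (S : fsystem) (r : nat -> R) (v rho : nat) : R :=
  sumR (map (liab r)
    (filter (fun k => andb (Nat.eqb (debtor k) v) (Nat.eqb (prio k) rho)) (contracts S))).

(* l_v^{(<= rho)}(r) = sum_{i=1}^{rho} l_v^{(i)}(r); equals 0 for rho = 0 *)
Definition liab_le (S : fsystem) (r : nat -> R) (v rho : nat) : R :=
  sumR (map (fun i => liab_prio S r v (Datatypes.S i)) (seq 0 rho)).

Definition payment (S : fsystem) (r : nat -> R) (k : contract) : R :=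
  let v := debtor k in
  let rho := prio k in
  let lp := liab_prio S r v rho in
  if Req_EM_T lp 0 then 0
  else liab r k *
       Rmin 1 (Rmax 0 ((r v * liab_bank S r v - liab_le S r v (rho - 1)) / lp)).

Definition assets (S : fsystem) (r : nat -> R) (v : nat) : R :=
  ext S v + sumR (map (payment S r)
                   (filter (fun k => Nat.eqb (creditor k) v) (contracts S))).

(* r is a solution (clearing vector); only entries at banks matter *)
Definition is_solution (S : fsystem) (r : nat -> R) : Prop :=
  forall v, (v < nbanks S)%nat ->
    0 <= r v <= 1 /\
    (assets S r v >= liab_bank S r v -> r v = 1) /\
    (assets S r v < liab_bank S r v -> r v = assets S r v / liab_bank S r v).

(* r is the unique solution of S (uniqueness up to the values at the banks) *)
Definition unique_solution (S : fsystem) (r : nat -> R) : Prop :=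
  is_solution S r /\
  forall r', is_solution S r' -> forall u, (u < nbanks S)%nat -> r' u = r u.

Definition same_except_prio (v : nat) (k k' : contract) : Prop :=
  debtor k' = debtor k /\ creditor k' = creditor k /\ weight k' = weight k /\
  reference k' = reference k /\ (prio k' <> prio k -> debtor k = v).

Definition reprioritized (S S' : fsystem) (v : nat) : Prop :=
  nbanks S' = nbanks S /\ ext S' = ext S /\ nprio S' = nprio S /\
  Forall2 (same_except_prio v) (contracts S) (contracts S').

(* Bank 0, with external assets 1, owes 1 to bank 1 and 1 to bank 2; bank 1 owes 1 back
   to bank 0 and 1 to bank 2; bank 2 owes nothing.  If bank 0 pays bank 2 first, bank 1
   receives max(0, 2 r_0 - 1), and r_0 = (1 + r_1)/2, r_1 = max(0, 2 r_0 - 1)/2 force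
   r_1 = max(0, r_1)/2, i.e. r_1 = 0 and r_0 = 1/2.  If bank 0 pays bank 1 first, part of
   that money flows back to bank 0 through bank 1's debt: now r_1 = min(1, 2 r_0)/2, whose
   only joint solution is r_0 = 3/4, r_1 = 1/2. *)

From Stdlib Require Import Reals List Lra Lia.
Import ListNotations.
Open Scope R_scope.

Definition clears (a l x : R) : Prop :=
  0 <= x <= 1 /\ (a >= l -> x = 1) /\ (a < l -> x = a / l).

Lemma clears_pos (a l x : R) : 0 < l -> 0 <= a <= l -> clears a l x <-> x = a / l.
Proof.
  intros Hl Ha.
  assert (Hy : a = a / l * l) by (field; lra).
  set (y := a / l) in *.
  assert (Hy01 : 0 <= y <= 1) by nra.
  unfold clears; split.
  - intros [_ [Hge Hlt]].
    destruct (Rlt_or_le a l) as [H | H]; [now apply Hlt | rewrite Hge; nra].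
  - intros ->; split; [lra|split; intros; [nra|reflexivity]].
Qed.

Lemma clears_no_debt (a x : R) : 0 <= a -> clears a 0 x <-> x = 1.
Proof. unfold clears; intros Ha; split; [intros [_ [H _]]; apply H; lra | intros ->; lra]. Qed.

Lemma sumR_nonneg (l : list R) : Forall (Rle 0) l -> 0 <= sumR l.
Proof. induction 1; unfold sumR in *; cbn; lra. Qed.

Lemma payment_debt_nonneg (S : fsystem) (r : nat -> R) (k : contract) :
  reference k = None -> 0 <= weight k -> 0 <= payment S r k.
Proof.
  intros Hdebt Hw; unfold payment, liab; rewrite Hdebt.
  destruct Req_EM_T; [lra|].
  apply Rmult_le_pos; [exact Hw|].
  unfold Rmin, Rmax; repeat destruct Rle_dec; lra.
Qed.

Lemma assets_nonneg (S : fsystem) (r : nat -> R) (v : nat) :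
  0 <= ext S v ->
  Forall (fun k => reference k = None /\ 0 <= weight k) (contracts S) ->
  0 <= assets S r v.
Proof.
  intros He Hdebt; unfold assets.
  enough (0 <= sumR (map (payment S r) (filter (fun k => Nat.eqb (creditor k) v) (contracts S))))
    by lra.
  apply sumR_nonneg, Forall_map, Forall_forall; intros k Hk.
  apply filter_In in Hk as [Hk _].
  rewrite Forall_forall in Hdebt; destruct (Hdebt k Hk).
  now apply payment_debt_nonneg.
Qed.

Lemma is_solution_iff_clears (S : fsystem) (r : nat -> R) :
  is_solution S r <->
  forall v, (v < nbanks S)%nat -> clears (assets S r v) (liab_bank S r v) (r v).
Proof. reflexivity. Qed.

Lemma unique_solution_of_iff (S : fsystem) (r : nat -> R) :
  (forall r', is_solution S r' <-> forall u, (u < nbanks S)%nat -> r' u = r u) ->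
  unique_solution S r.
Proof. intros H; split; [now apply H|]; intros r'; apply H. Qed.

Lemma forall_lt3_iff (P : nat -> Prop) :
  (forall u, (u < 3)%nat -> P u) <-> P 0%nat /\ P 1%nat /\ P 2%nat.
Proof.
  split; [intros H; repeat split; apply H; lia|].
  intros (H0 & H1 & H2) [|[|[|u]]] Hu; auto; lia.
Qed.

Definition endowment (v : nat) : R := match v with O => 1 | _ => 0 end.

Definition chain (p q : nat) : fsystem := mkSystem 3 endowment 2
  [mkContract 0 1 1 None p; mkContract 0 2 1 None q;
   mkContract 1 0 1 None 1; mkContract 1 2 1 None 1].

Lemma chain_wf (p q : nat) :
  (1 <= p <= 2)%nat -> (1 <= q <= 2)%nat -> wf_system (chain p q).
Proof.
  intros Hp Hq; split; [cbn; lia|split].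
  - intros [|v] _; cbn; lra.
  - repeat apply Forall_cons; try apply Forall_nil; repeat split; cbn; lia || lra.
Qed.

Lemma chain_reprioritized : reprioritized (chain 2 1) (chain 1 2) 0.
Proof. repeat constructor; cbn; lia. Qed.

Lemma chain_liab_bank (p q : nat) (r : nat -> R) (v : nat) :
  liab_bank (chain p q) r v = if (v <? 2)%nat then 2 else 0.
Proof. destruct v as [|[|v]]; cbn; lra. Qed.

Ltac chain_payments :=
  unfold assets, payment, liab_prio, liab_bank, liab_le, liab; cbn -[Rmin Rmax];
  repeat (destruct Req_EM_T; [lra|]);
  unfold Rmin, Rmax; repeat destruct Rle_dec; lra.

Lemma chain_assets0 (p q : nat) (r : nat -> R) :
  0 <= r 1%nat <= 1 -> assets (chain p q) r 0 = 1 + r 1%nat.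
Proof. intros; chain_payments. Qed.

Lemma chain21_assets1 (r : nat -> R) :
  0 <= r 0%nat <= 1 -> assets (chain 2 1) r 1 = Rmax 0 (2 * r 0%nat - 1).
Proof. intros; chain_payments. Qed.

Lemma chain12_assets1 (r : nat -> R) :
  0 <= r 0%nat <= 1 -> assets (chain 1 2) r 1 = Rmin 1 (2 * r 0%nat).
Proof. intros; chain_payments. Qed.

Lemma chain_clears0 (p q : nat) (r : nat -> R) :
  0 <= r 1%nat <= 1 ->
  clears (assets (chain p q) r 0) (liab_bank (chain p q) r 0) (r 0%nat) <->
  r 0%nat = (1 + r 1%nat) / 2.
Proof. intros; rewrite chain_assets0, chain_liab_bank by lra; apply clears_pos; cbn; lra. Qed.

Lemma chain_clears2 (p q : nat) (r : nat -> R) :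
  clears (assets (chain p q) r 2) (liab_bank (chain p q) r 2) (r 2%nat) <-> r 2%nat = 1.
Proof.
  rewrite chain_liab_bank; apply clears_no_debt, assets_nonneg; [cbn; lra|].
  repeat constructor; cbn; lra.
Qed.

Lemma chain21_clears1 (r : nat -> R) :
  0 <= r 0%nat <= 1 ->
  clears (assets (chain 2 1) r 1) (liab_bank (chain 2 1) r 1) (r 1%nat) <->
  r 1%nat = Rmax 0 (2 * r 0%nat - 1) / 2.
Proof.
  intros; rewrite chain21_assets1, chain_liab_bank by lra; apply clears_pos; [lra|].
  unfold Rmax; destruct Rle_dec; lra.
Qed.

Lemma chain12_clears1 (r : nat -> R) :
  0 <= r 0%nat <= 1 ->
  clears (assets (chain 1 2) r 1) (liab_bank (chain 1 2) r 1) (r 1%nat) <->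
  r 1%nat = Rmin 1 (2 * r 0%nat) / 2.
Proof.
  intros; rewrite chain12_assets1, chain_liab_bank by lra; apply clears_pos; [lra|].
  unfold Rmin; destruct Rle_dec; lra.
Qed.

Lemma chain21_is_solution_iff (r : nat -> R) :
  is_solution (chain 2 1) r <-> r 0%nat = 1/2 /\ r 1%nat = 0 /\ r 2%nat = 1.
Proof.
  rewrite is_solution_iff_clears, forall_lt3_iff; split.
  - intros (H0 & H1 & H2).
    pose proof (proj1 H0); pose proof (proj1 H1).
    rewrite chain_clears0 in H0 by lra; rewrite chain21_clears1 in H1 by lra;
      rewrite chain_clears2 in H2.
    unfold Rmax in H1; destruct Rle_dec; lra.
  - intros (E0 & E1 & E2).
    rewrite chain_clears0, chain21_clears1, chain_clears2 by lra.
    rewrite E0, E1, E2; unfold Rmax; destruct Rle_dec; lra.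
Qed.

Lemma chain12_is_solution_iff (r : nat -> R) :
  is_solution (chain 1 2) r <-> r 0%nat = 3/4 /\ r 1%nat = 1/2 /\ r 2%nat = 1.
Proof.
  rewrite is_solution_iff_clears, forall_lt3_iff; split.
  - intros (H0 & H1 & H2).
    pose proof (proj1 H0); pose proof (proj1 H1).
    rewrite chain_clears0 in H0 by lra; rewrite chain12_clears1 in H1 by lra;
      rewrite chain_clears2 in H2.
    unfold Rmin in H1; destruct Rle_dec; lra.
  - intros (E0 & E1 & E2).
    rewrite chain_clears0, chain12_clears1, chain_clears2 by lra.
    rewrite E0, E1, E2; unfold Rmin; destruct Rle_dec; lra.
Qed.

Definition clearing_before (v : nat) : R :=
  match v with O => 1/2 | 1%nat => 0 | _ => 1 end.

Definition clearing_after (v : nat) : R :=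
  match v with O => 3/4 | 1%nat => 1/2 | _ => 1 end.

Theorem mainTheorem8 :
  exists (S : fsystem) (v : nat),
    wf_system S /\ (v < nbanks S)%nat /\
    exists r : nat -> R, unique_solution S r /\
    exists S' : fsystem, wf_system S' /\ reprioritized S S' v /\
    exists r' : nat -> R, unique_solution S' r' /\ r' v > r v.
Proof.
  exists (chain 2 1), 0%nat.
  split; [apply chain_wf; lia|split; [cbn; lia|]].
  exists clearing_before; split.
  { apply unique_solution_of_iff; intros r.
    rewrite chain21_is_solution_iff, forall_lt3_iff; reflexivity. }
  exists (chain 1 2).
  split; [apply chain_wf; lia|split; [exact chain_reprioritized|]].
  exists clearing_after; split.
  { apply unique_solution_of_iff; intros r.
    rewrite chain12_is_solution_iff, forall_lt3_iff; reflexivity. }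
  cbn; lra.
Qed.
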